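(* Let $Q_1,Q_1',Q_2,Q_2'$ be finite quandles with $Q_1\approx Q_1'$ and $Q_2\approx Q_2'$. Then $Q_1\times Q_2\approx Q_1'\times Q_2'$.
   Context: A quandle is a set $X$ with a binary operation $*$ such that $a*a=a$; for all $b,c$ there is a unique $a$ with $a*b=c$; and $(a*b)*c=(a*c)*(b*c)$. The product quandle $Q_1\times Q_2$ has componentwise operation $(a,b)*(a',b')=(a*a',b*b')$. $\mathrm{Col}_Q(K)$ is the number of colorings of an oriented knot $K$ by $Q$ (colorings being maps from arcs of a diagram to $Q$ satisfying: over-arc colored $y$, incoming under-arc colored $x$ (fixed orientation convention) implies the other under-arc is colored $x*y$; equivalently homomorphisms from the fundamental quandle of $K$ to $Q$). For quandles $Q,Q'$, write $Q\approx Q'$ if $\mathrm{Col}_Q(K)=\mathrm{Col}_{Q'}(K)$ for every knot $K$. *)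

From mathcomp Require Import all_boot.
Set Implicit Arguments. Unset Strict Implicit. Unset Printing Implicit Defensive.

Definition is_quandle (T : finType) (op : T -> T -> T) : Prop :=
  [/\ (forall a, op a a = a),
      (forall b c, exists! a, op a b = c) &
      (forall a b c, op (op a b) c = op (op a c) (op b c))].

Definition prod_op (T1 T2 : finType) (op1 : T1 -> T1 -> T1) (op2 : T2 -> T2 -> T2)
  (x y : T1 * T2) : T1 * T2 := (op1 x.1 y.1, op2 x.2 y.2).

(** Knots are presented as closures of braids (Alexander's theorem).
    A braid word on m strands is a sequence of letters (i, s): the generator
    sigma_{i+1} (positions i and i+1, 0-based) if s = true, its inverse if
    s = false. *)
Definition braid_letter := (nat * bool)%type.

Definition swap_pos (i p : nat) : nat :=
  if p == i then i.+1 else if p == i.+1 then i else p.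

Definition braid_perm (w : seq braid_letter) (p : nat) : nat :=
  foldl (fun q l => swap_pos l.1 q) p w.

(** The closure of the braid word w on m strands is a knot (one component). *)
Definition is_knot_braid (m : nat) (w : seq braid_letter) : bool :=
  [&& 0 < m, all (fun l : braid_letter => l.1.+1 < m) w &
      [forall j : 'I_m, [exists k : 'I_m, iter k (braid_perm w) 0 == j]]].

(** Coloring rule across the crossing sigma_{i+1}: the colors x of the strands
    before the crossing and y after satisfy
    y_i = x_{i+1}, y_{i+1} = x_i * x_{i+1}, y_j = x_j otherwise. *)
Definition sigma_rel (T : finType) (op : T -> T -> T) (m i : nat)
  (x y : {ffun 'I_m -> T}) : bool :=
  [forall j : 'I_m, forall j' : 'I_m,
     ((val j == i) && (val j' == i.+1)) ==> ((y j == x j') && (y j' == op (x j) (x j')))]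
  && [forall j : 'I_m, ((val j != i) && (val j != i.+1)) ==> (y j == x j)].

Definition step_rel (T : finType) (op : T -> T -> T) (m : nat) (l : braid_letter)
  (x y : {ffun 'I_m -> T}) : bool :=
  if l.2 then @sigma_rel T op m l.1 x y else @sigma_rel T op m l.1 y x.

(** A coloring of the closed braid diagram: colors of the m strands at each of
    the (size w).+1 levels between crossings, with the last level identified
    with the first (closure); consecutive levels related by the crossing rule.
    These are exactly the colorings of the arcs of the closed-braid diagram. *)
Definition is_coloring (T : finType) (op : T -> T -> T) (m : nat)
  (w : seq braid_letter) (c : {ffun 'I_(size w).+1 -> {ffun 'I_m -> T}}) : bool :=
  (c ord_max == c ord0) &&
  [forall k : 'I_(size w),
     @step_rel T op m (nth (0, true) w k) (c (widen_ord (leqnSn _) k)) (c (lift ord0 k))].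

Definition Col (T : finType) (op : T -> T -> T) (m : nat) (w : seq braid_letter) : nat :=
  #|[set c : {ffun 'I_(size w).+1 -> {ffun 'I_m -> T}} | @is_coloring T op m w c]|.

Definition col_equiv (T T' : finType) (op : T -> T -> T) (op' : T' -> T' -> T') : Prop :=
  forall (m : nat) (w : seq braid_letter), is_knot_braid m w -> Col op m w = Col op' m w.

From mathcomp Require Import all_boot.
Set Implicit Arguments. Unset Strict Implicit. Unset Printing Implicit Defensive.

(* A coloring by [Q1 * Q2] is exactly a pair of colorings by [Q1] and by [Q2],
   since both the crossing rule and the closure condition hold componentwise.
   Hence [Col (Q1 * Q2) K = Col Q1 K * Col Q2 K] for every braid, and the
   theorem follows. *)

Lemma forall_andb (I : finType) (P Q : pred I) :
  [forall i, P i && Q i] = [forall i, P i] && [forall i, Q i].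
Proof.
apply/forallP/andP => [H|[/forallP H1 /forallP H2] i]; last by rewrite H1 H2.
by split; apply/forallP => i; case/andP: (H i).
Qed.

Section ProductColorings.
Variables (T1 T2 : finType) (op1 : T1 -> T1 -> T1) (op2 : T2 -> T2 -> T2).

Definition ffun_fst m (x : {ffun 'I_m -> T1 * T2}) : {ffun 'I_m -> T1} :=
  [ffun j => (x j).1].
Definition ffun_snd m (x : {ffun 'I_m -> T1 * T2}) : {ffun 'I_m -> T2} :=
  [ffun j => (x j).2].

Lemma ffun_pair_eqE m (x y : {ffun 'I_m -> T1 * T2}) :
  (x == y) = (ffun_fst x == ffun_fst y) && (ffun_snd x == ffun_snd y).
Proof.
apply/eqP/andP => [->|[/eqP/ffunP e1 /eqP/ffunP e2]]; first by rewrite !eqxx.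
apply/ffunP => j; move: (e1 j) (e2 j); rewrite !ffunE.
by case: (x j) (y j) => [a b] [c d] /= -> ->.
Qed.

Lemma sigma_rel_prod m i (x y : {ffun 'I_m -> T1 * T2}) :
  sigma_rel (prod_op op1 op2) i x y =
  sigma_rel op1 i (ffun_fst x) (ffun_fst y) && sigma_rel op2 i (ffun_snd x) (ffun_snd y).
Proof.
have pair_eqE (u v : T1 * T2) : (u == v) = (u.1 == v.1) && (u.2 == v.2).
  by case: u v => [? ?] [? ?].
have crossingE (j j' : 'I_m) :
  ((val j == i) && (val j' == i.+1)) ==> (y j == x j') && (y j' == prod_op op1 op2 (x j) (x j'))
  = (((val j == i) && (val j' == i.+1)) ==> (ffun_fst y j == ffun_fst x j') &&
       (ffun_fst y j' == op1 (ffun_fst x j) (ffun_fst x j'))) &&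
    (((val j == i) && (val j' == i.+1)) ==> (ffun_snd y j == ffun_snd x j') &&
       (ffun_snd y j' == op2 (ffun_snd x j) (ffun_snd x j'))).
  by rewrite !ffunE !pair_eqE /=; case: (_ && _); rewrite //= andbACA.
have idleE (j : 'I_m) :
  ((val j != i) && (val j != i.+1)) ==> (y j == x j)
  = (((val j != i) && (val j != i.+1)) ==> (ffun_fst y j == ffun_fst x j)) &&
    (((val j != i) && (val j != i.+1)) ==> (ffun_snd y j == ffun_snd x j)).
  by rewrite !ffunE pair_eqE; case: (_ && _).
rewrite /sigma_rel (eq_forallb (fun j => eq_forallb (crossingE j))) (eq_forallb idleE).
under eq_forallb => j do rewrite forall_andb.
by rewrite !forall_andb andbACA.
Qed.

Lemma step_rel_prod m l (x y : {ffun 'I_m -> T1 * T2}) :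
  step_rel (prod_op op1 op2) l x y =
  step_rel op1 l (ffun_fst x) (ffun_fst y) && step_rel op2 l (ffun_snd x) (ffun_snd y).
Proof. by rewrite /step_rel; case: l.2; rewrite sigma_rel_prod. Qed.

Definition split_coloring m n (c : {ffun 'I_n -> {ffun 'I_m -> T1 * T2}}) :=
  ([ffun k => ffun_fst (c k)], [ffun k => ffun_snd (c k)]).

Definition pair_coloring m n (c1 : {ffun 'I_n -> {ffun 'I_m -> T1}})
  (c2 : {ffun 'I_n -> {ffun 'I_m -> T2}}) : {ffun 'I_n -> {ffun 'I_m -> T1 * T2}} :=
  [ffun k => [ffun j => (c1 k j, c2 k j)]].

Lemma split_coloringK m n :
  cancel (@split_coloring m n) (fun c12 => pair_coloring c12.1 c12.2).
Proof. by move=> c; apply/ffunP => k; apply/ffunP => j; rewrite !ffunE -surjective_pairing. Qed.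

Lemma pair_coloringK m n c1 c2 : @split_coloring m n (pair_coloring c1 c2) = (c1, c2).
Proof. by congr pair; apply/ffunP => k; apply/ffunP => j; rewrite !ffunE. Qed.

Lemma is_coloring_prod m w c :
  @is_coloring _ (prod_op op1 op2) m w c =
  is_coloring op1 (split_coloring c).1 && is_coloring op2 (split_coloring c).2.
Proof.
rewrite /is_coloring !ffunE ffun_pair_eqE andbACA; congr (_ && _).
by rewrite -forall_andb; apply: eq_forallb => k; rewrite step_rel_prod !ffunE.
Qed.

Lemma Col_prod m w : Col (prod_op op1 op2) m w = Col op1 m w * Col op2 m w.
Proof.
rewrite /Col -cardsX -(card_imset _ (can_inj (@split_coloringK m (size w).+1))).
congr #|pred_of_set _|; apply/setP => -[c1 c2]; rewrite !inE /=.
apply/imsetP/andP => [[c] | [col1 col2]].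
  by rewrite inE is_coloring_prod => /andP[col1 col2] [-> ->].
exists (pair_coloring c1 c2); last by rewrite pair_coloringK.
by rewrite inE is_coloring_prod pair_coloringK col1.
Qed.

End ProductColorings.

Theorem lemma5p1 (T1 T1' T2 T2' : finType)
  (op1 : T1 -> T1 -> T1) (op1' : T1' -> T1' -> T1')
  (op2 : T2 -> T2 -> T2) (op2' : T2' -> T2' -> T2') :
  is_quandle op1 -> is_quandle op1' -> is_quandle op2 -> is_quandle op2' ->
  col_equiv op1 op1' -> col_equiv op2 op2' ->
  col_equiv (prod_op op1 op2) (prod_op op1' op2').
Proof.
move=> _ _ _ _ equiv1 equiv2 m w knot_w.
by rewrite !Col_prod equiv1 // equiv2.
Qed.
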